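(* Let $m$ be a positive integer and let $a,d_1,d_2\in\mathbb{Z}/m\mathbb{Z}$ with $\gcd(d_1,m)=\gcd(d_2,m)$, and let $n$ be a positive integer with $n\equiv 0$ or $n\equiv -1\pmod{m/\gcd(d_1,m)}$. Then the arithmetic triangle $\nabla=\mathrm{AT}(a,d_1,d_2,n)$ satisfies $\mathfrak{m}_\nabla(x+\gcd(d_2-d_1,m))=\mathfrak{m}_\nabla(x)$ for all $x\in\mathbb{Z}/m\mathbb{Z}$.
   Context: For $d\in\mathbb{Z}/m\mathbb{Z}$, $\gcd(d,m)$ is the gcd of $m$ with any integer representative of $d$. The arithmetic triangle $\mathrm{AT}(a,d_1,d_2,n)$ is the family $(a+id_2+jd_1)_{(i,j)\in\mathbb{N}^2,\,i+j<n}$ of elements of $\mathbb{Z}/m\mathbb{Z}$, regarded as a multiset; $\mathfrak{m}_\nabla(x)$ is the number of $(i,j)$ with $i+j<n$ and $a+id_2+jd_1=x$. *)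

From mathcomp Require Import all_boot all_order all_algebra.
Set Implicit Arguments. Unset Strict Implicit. Unset Printing Implicit Defensive.
Import Order.TTheory GRing.Theory Num.Theory.
Local Open Scope ring_scope.

(* Elements of Z/mZ are represented by integers; equality in Z/mZ is
   congruence modulo m.  gcd(d, m) for d in Z/mZ is gcdz d m (independent of
   the representative). *)

Definition at_mult (m : nat) (a d1 d2 : int) (n : nat) (x : int) : nat :=
  #|[set p : 'I_n * 'I_n |
      ((p.1 : nat) + (p.2 : nat) < n)%N &&
      ((a + (p.1 : nat)%:Z * d2 + (p.2 : nat)%:Z * d1 == x %[mod m%:Z])%Z)]|.

From mathcomp Require Import all_boot all_order all_algebra.
Import Order.TTheory GRing.Theory Num.Theory.
From mathcomp Require Import ring.
Local Open Scope ring_scope.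

(* Replacing x by x + (d2 - d1) amounts to moving the triangle by
   (i, j) |-> (i - 1, j + 1).  The moved triangle loses the row a + i d2
   (0 <= i < n) and gains the column a - d2 + j d1 (1 <= j <= n), so the
   multiplicity changes by the difference between the multiplicities of
   x - a + d2 among d1, 2 d1, ..., n d1 and among d2, 2 d2, ..., n d2.  Modulo m
   the progression k d is periodic with period q = m / gcd(d, m) and meets each
   multiple of gcd(d, m) exactly once per period, so when q divides n or n + 1
   both multiplicities only depend on gcd(d1, m) = gcd(d2, m).  Invariance
   under d2 - d1 and under m gives invariance under gcd(d2 - d1, m) by Bezout. *)

Section ShiftInvariance.
Variables (T : Type) (f : int -> T).

Lemma shift_invariantMz (s : int) :
  (forall x, f (x + s) = f x) -> forall k x, f (x + k * s) = f x.
Proof.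
move=> fs k; wlog k_ge0 : k / 0 <= k => [hwlog x|].
  have [/hwlog -> // | k_lt0] := leP 0 k.
  by rewrite -(hwlog (- k) _ (x + k * s)) ?oppr_ge0 ?ltW // mulNr addrK.
case: k k_ge0 => // k _ x; elim: k => [|k IHk]; first by rewrite mul0r addr0.
by rewrite -[RHS]IHk -(fs (x + k%:Z * s)) -addrA -[k.+1]addn1 PoszD mulrDl mul1r.
Qed.

Lemma shift_invariant_gcdz (s t : int) :
  (forall x, f (x + s) = f x) -> (forall x, f (x + t) = f x) ->
  forall x, f (x + gcdz s t) = f x.
Proof.
move=> fs ft x; have [u [v <-]] := Bezoutz s t.
by rewrite addrA (shift_invariantMz _ ft) (shift_invariantMz _ fs).
Qed.

End ShiftInvariance.

Lemma linear_congruence_solution {m d z : int} :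
  gcdz d m != 0 -> (gcdz d m %| z)%Z ->
  exists k0, forall k, (k * d == z %[mod m])%Z = (k == k0 %[mod (m %/ gcdz d m)%Z])%Z.
Proof.
set g := gcdz d m => g_neq0 /dvdzP[z' ->].
have [u [v uvE]] := Bezoutz d m; rewrite -/g in uvE.
have [d' dE] := dvdzP (dvdz_gcdl d m); rewrite -/g in dE.
have mE : (m %/ g)%Z * g = m := divzK (dvdz_gcdr d m).
exists (u * z') => k.
(* With u d + v m = g: multiply by u for one direction, by d / g for the other. *)
have -> : (k * d == z' * g %[mod m])%Z = (k * g == u * z' * g %[mod m])%Z.
  rewrite !eqz_mod_dvd; apply/idP/idP => mdvd.
    have -> : k * g - u * z' * g = u * (k * d - z' * g) + k * v * m.
      by rewrite -uvE; ring.
    by rewrite rpredD ?dvdz_mull.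
  have diffE : k * d - z' * g
      = d' * (k * g - u * z' * g) - z' * v * m + z' * (u * d + v * m - g).
    by rewrite dE; ring.
  by rewrite diffE uvE subrr mulr0 addr0 rpredB ?dvdz_mull.
by rewrite !eqz_mod_dvd -mulrBl -{1}mE dvdz_mul2r.
Qed.

Lemma sum_eqz_mod (q : nat) (w : int) : (0 < q)%N ->
  (\sum_(0 <= k < q) ((k%:Z == w %[mod q%:Z])%Z : nat))%N = 1%N.
Proof.
move=> q_gt0; set c := `|(w %% q%:Z)%Z|%N.
have cE : c%:Z = (w %% q%:Z)%Z by rewrite gez0_abs // modz_ge0 // -lt0n.
have c_lt_q : (c < q)%N by rewrite -ltz_nat cE ltz_pmod.
rewrite (eq_big_nat _ _ (F2 := fun k => (k == c) : nat)); last first.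
  by move=> k /andP[_ k_lt_q]; rewrite -cE modz_small ?ltz_nat.
rewrite -big_mkcond /= sum1_count count_uniq_mem ?iota_uniq //.
by rewrite mem_index_iota c_lt_q.
Qed.

Definition ap_mult (m : nat) (a d : int) (N : nat) (x : int) : nat :=
  (\sum_(0 <= k < N) ((a + k%:Z * d == x %[mod m%:Z])%Z : nat))%N.

Definition mod_order (m : nat) (d : int) : nat := (m %/ `|gcdz d m%:Z|)%N.

Section Progressions.
Variables (m : nat) (d : int).

Lemma mod_orderE : (mod_order m d)%:Z = (m%:Z %/ gcdz d m%:Z)%Z.
Proof. by rewrite /mod_order /= -divz_nat. Qed.

Lemma mod_order_gt0 : (0 < m)%N -> (0 < mod_order m d)%N.
Proof.
move=> m_gt0; rewrite /mod_order /= divn_gt0 ?gcdn_gt0 ?m_gt0 ?orbT //.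
exact: dvdn_leq (dvdn_gcdr _ _).
Qed.

Lemma dvdz_mod_order : (m%:Z %| (mod_order m d)%:Z * d)%Z.
Proof. by rewrite mod_orderE mulrC mulz_divCA_gcd dvdz_mulr. Qed.

Lemma ap_multSl a N x :
  (ap_mult m (a + d) d N x + (a == x %[mod m%:Z])%Z)%N = ap_mult m a d N.+1 x.
Proof.
rewrite /ap_mult big_nat_recl // mul0r addr0 addnC; congr (_ + _)%N.
by apply: eq_bigr => k _; rewrite intS mulrDl mul1r addrA.
Qed.

Lemma ap_multSr a N x :
  ap_mult m a d N.+1 x = (ap_mult m a d N x + (a + N%:Z * d == x %[mod m%:Z])%Z)%N.
Proof. by rewrite /ap_mult big_nat_recr. Qed.

Lemma ap_mult_periodD a p N x : (m%:Z %| p%:Z * d)%Z ->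
  ap_mult m a d (p + N) x = (ap_mult m a d p x + ap_mult m a d N x)%N.
Proof.
move=> m_dvd_pd; rewrite /ap_mult (big_cat_nat _ (leq_addr N p)) //=.
congr (_ + _)%N; rewrite -{1}[p]add0n big_addn addKn.
apply: eq_bigr => k _; rewrite !eqz_mod_dvd PoszD mulrDl addrA.
by rewrite (addrAC _ (p%:Z * d)) rpredDr.
Qed.

Lemma ap_mult_shift_period a N x : (m%:Z %| N%:Z * d)%Z ->
  ap_mult m (a + d) d N x = ap_mult m a d N x.
Proof.
move=> m_dvd_Nd; apply: (@addIn (a == x %[mod m%:Z])%Z).
rewrite ap_multSl ap_multSr; congr (_ + _)%N.
by rewrite !eqz_mod_dvd addrAC rpredDr.
Qed.

Lemma ap_mult_mod_order a x : (0 < m)%N ->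
  ap_mult m a d (mod_order m d) x = (gcdz d m%:Z %| x - a)%Z.
Proof.
move=> m_gt0; have g_neq0 : gcdz d m%:Z != 0.
  by rewrite gcdz_eq0 negb_and orbC -lt0n m_gt0.
have [g_dvd|g_ndvd] := boolP (gcdz d m%:Z %| x - a)%Z.
  have [k0 Ek0] := linear_congruence_solution g_neq0 g_dvd; rewrite -mod_orderE in Ek0.
  rewrite -[RHS](sum_eqz_mod _ k0 (mod_order_gt0 m_gt0)) /ap_mult.
  by apply: eq_bigr => k _; rewrite -Ek0 !eqz_mod_dvd opprB addrA [a + _]addrC.
rewrite /ap_mult big1 // => k _; apply/eqP; rewrite eqb0; apply: contra g_ndvd.
rewrite eqz_mod_dvd => /(dvdz_trans (dvdz_gcdr d m%:Z)) g_dvd.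
have -> : x - a = k%:Z * d - (a + k%:Z * d - x) by ring.
by rewrite rpredB ?dvdz_mull ?dvdz_gcdl.
Qed.

Lemma ap_mult_mod_orderM a t x : (0 < m)%N ->
  ap_mult m a d (t * mod_order m d) x = (t * (gcdz d m%:Z %| (x - a)%R)%Z)%N.
Proof.
move=> m_gt0; elim: t => [|t IHt]; first by rewrite /ap_mult big_geq.
by rewrite mulSn ap_mult_periodD ?dvdz_mod_order // IHt ap_mult_mod_order.
Qed.

End Progressions.

Lemma ap_mult_eq_gcdz (m : nat) (d1 d2 : int) (N : nat) (a x : int) :
  (0 < m)%N -> gcdz d1 m%:Z = gcdz d2 m%:Z ->
  (mod_order m d1 %| N)%N || (mod_order m d1 %| N + 1)%N ->
  ap_mult m (a + d1) d1 N x = ap_mult m (a + d2) d2 N x.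
Proof.
move=> m_gt0 eq_gcd; have eq_ord : mod_order m d1 = mod_order m d2.
  by rewrite /mod_order eq_gcd.
(* If q | N, the progressions from a + d and from a agree since N d = 0
   (mod m); if q | N + 1, prepending the term a makes whole periods. *)
case/orP => /dvdnP[t Nt].
  have m_dvd_Nd d : mod_order m d = mod_order m d1 -> (m%:Z %| N%:Z * d)%Z.
    by move=> eq_d; rewrite Nt -eq_d PoszM -mulrA dvdz_mull ?dvdz_mod_order.
  rewrite !ap_mult_shift_period ?m_dvd_Nd // Nt {2}eq_ord.
  by rewrite !ap_mult_mod_orderM // eq_gcd.
apply: (@addIn (a == x %[mod m%:Z])%Z).
by rewrite !ap_multSl -addn1 Nt {2}eq_ord !ap_mult_mod_orderM // eq_gcd.
Qed.

Lemma at_multE m a d1 d2 n x : at_mult m a d1 d2 n x =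
  (\sum_(0 <= i < n) \sum_(0 <= j < n)
     ((i + j < n)%N && (a + i%:Z * d2 + j%:Z * d1 == x %[mod m%:Z])%Z : nat))%N.
Proof.
symmetry; rewrite big_mkord; under eq_bigr do rewrite big_mkord.
rewrite pair_big /= /at_mult -sum1_card [RHS]big_mkcond /=.
by apply: eq_bigr => p _; rewrite inE; case: (_ && _).
Qed.

Lemma at_mult_swap m a d1 d2 n x : at_mult m a d1 d2 n x = at_mult m a d2 d1 n x.
Proof.
rewrite !at_multE exchange_big; apply: eq_bigr => i _; apply: eq_bigr => j _.
by rewrite addnC addrAC.
Qed.

Lemma at_mult_translate m a d1 d2 n x c :
  at_mult m a d1 d2 n (x + c) = at_mult m (a - c) d1 d2 n x.
Proof.
apply: eq_card => p; rewrite !inE !eqz_mod_dvd.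
by congr (_ && (_ %| _)%Z); ring.
Qed.

Lemma at_mult_recl m a d1 d2 n x : at_mult m a d1 d2 n.+1 x =
  (ap_mult m a d2 n.+1 x + at_mult m (a + d1) d1 d2 n x)%N.
Proof.
rewrite !at_multE; under eq_bigr do rewrite big_nat_recl //.
rewrite big_split /=; congr (_ + _)%N.
  by apply: eq_big_nat => i /andP[_ lt_i]; rewrite addn0 lt_i mul0r addr0.
rewrite big_nat_recr //= [X in (_ + X)%N]big1 ?addn0 => [|j _]; last first.
  by rewrite addnS ltnS ltnNge leq_addr.
apply: eq_bigr => i _; apply: eq_bigr => j _.
by rewrite addnS ltnS intS mulrDl mul1r addrA [a + _ + d1]addrAC.
Qed.

Lemma at_mult_shift_sub (m : nat) (a d1 d2 : int) (n : nat) (x : int) :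
  (0 < m)%N -> gcdz d1 m%:Z = gcdz d2 m%:Z ->
  (mod_order m d1 %| n)%N || (mod_order m d1 %| n + 1)%N ->
  at_mult m a d1 d2 n (x + (d2 - d1)) = at_mult m a d1 d2 n x.
Proof.
move=> m_gt0 eq_gcd; case: n => [_|n hq]; first by rewrite !at_multE !big_geq.
rewrite at_mult_translate at_mult_swap at_mult_recl at_mult_swap [RHS]at_mult_recl.
have -> : a - (d2 - d1) = a - d2 + d1 by ring.
rewrite [a - d2 + d1 + d2]addrAC subrK; congr (_ + _)%N.
by rewrite (@ap_mult_eq_gcdz _ _ d2) ?subrK.
Qed.

Theorem theorem13 (m : nat) (a d1 d2 : int) (n : nat) :
  (0 < m)%N -> gcdz d1 m%:Z = gcdz d2 m%:Z -> (0 < n)%N ->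
  (let q := (m %/ `|gcdz d1 m%:Z|)%N in
   (n %% q == 0)%N || ((n + 1) %% q == 0)%N) ->
  forall x : int,
    at_mult m a d1 d2 n (x + gcdz (d2 - d1) m%:Z) = at_mult m a d1 d2 n x.
Proof.
move=> m_gt0 eq_gcd _ hq x.
apply: (@shift_invariant_gcdz _ (at_mult m a d1 d2 n)) => {x} x.
  exact: at_mult_shift_sub.
by rewrite /at_mult modzDr.
Qed.
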